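(* Let $M=\{(x,y,z)\in\mathbb{C}^3: x^2+y^2+z^2=3xyz\}$ and let $\varphi^z_t$ denote the flow (defined for all $t\in\mathbb{C}$) of the vector field $V^z=(2y-3xz)\partial_x-(2x-3yz)\partial_y$ on $M$. Let $(x,y,z)\in M$ with $z\neq0$ and $4-9z^2\neq0$. Then the map \[ \mathbb{C}\ni t\mapsto\varphi^z_t(x,y,z)\in\{(u,v,z): u^2+v^2+z^2=3uvz\} \] is surjective.
   Context: The flow $\varphi^z_t$ preserves the $z$-coordinate, so its image lies in the indicated curve. *)

From HB Require Import structures.
From mathcomp Require Import all_boot all_order all_algebra.
From mathcomp Require Import complex.
From mathcomp Require Import all_classical all_reals all_analysis.
Set Implicit Arguments. Unset Strict Implicit. Unset Printing Implicit Defensive.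
Import Order.TTheory GRing.Theory Num.Theory.
Import numFieldNormedType.Exports.
Local Open Scope ring_scope.
Local Open Scope complex_scope.

(* The complex numbers, packaged as a numClosedFieldType so that the
   standard (complex) normed-module structure of MathComp-Analysis applies. *)
Definition Cx (R : realType) : numClosedFieldType := R[i].

Definition inM (R : realType) (x y z : Cx R) : Prop :=
  x ^+ 2 + y ^+ 2 + z ^+ 2 = 3%:R * x * y * z.

(* (X,Y,Z) : C -> C^3 is the (complex-time) integral curve of
   V^z = (2y - 3xz) d/dx - (2x - 3yz) d/dy through (x,y,z) at t = 0,
   i.e. t |-> phi^z_t(x,y,z); derivatives are complex derivatives. *)
Definition is_flow_Vz (R : realType) (X Y Z : Cx R -> Cx R) (x y z : Cx R) : Prop :=
  [/\ X 0 = x, Y 0 = y, Z 0 = z &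
   forall t : Cx R,
     [/\ is_derive t (1 : Cx R) X (2%:R * Y t - 3%:R * X t * Z t),
         is_derive t (1 : Cx R) Y (- (2%:R * X t - 3%:R * Y t * Z t)) &
         is_derive t (1 : Cx R) Z (0 : Cx R)]].

(* Z is constant since its derivative vanishes, and F = X^2 + Y^2 + Z^2 - 3XYZ
   has zero derivative along V^z, so the orbit stays on the curve.  Fix L with
   L^2 = 9z^2 - 4, nonzero by hypothesis.  The linear coordinates
   A = 2X - (3z + L)Y and B = 2X - (3z - L)Y satisfy A' = L A, and on the curve
   A B = -4z^2 != 0.  Hence A(t) = A(0) exp(L t) takes every nonzero value; a
   point (u, v) of the curve has A(u, v) != 0, then B = -4z^2 / A is forced, and
   (A, B) determines (X, Y) because L != 0.
   Complex derivatives are exploited along real lines t = x + r c, where the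
   real and imaginary parts of f' = mu f form a real planar linear system that
   is solved with expR, cos and sin. *)

From HB Require Import structures.
From mathcomp Require Import all_boot all_order all_algebra.
From mathcomp Require Import complex.
From mathcomp Require Import all_classical all_reals all_analysis.
From mathcomp Require Import ring.
Set Implicit Arguments.
Unset Strict Implicit.
Unset Printing Implicit Defensive.
Import Order.TTheory GRing.Theory Num.Theory.
Import numFieldNormedType.Exports.
Local Open Scope ring_scope.
Local Open Scope complex_scope.

Section RealPlanarODE.
Variable R : realType.

Lemma is_derive_comp_mull (h : R -> R) (k r dh : R) :
  is_derive (k * r) 1 h dh -> is_derive r 1 (fun s => h (k * s)) (dh * k).
Proof.
move=> dh_h; apply: is_derive1_comp => //.
by apply: is_derive_eq; exact: mulr1.
Qed.

(* The planar system p' = a p - b q, q' = a q + b p is the complex equation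
   w' = (a + i b) w for w = p + i q, written in real coordinates. *)
Lemma planar_linear_ode_sol (p q : R -> R) (a b : R) :
  (forall r : R, is_derive r 1 p (a * p r - b * q r)) ->
  (forall r : R, is_derive r 1 q (a * q r + b * p r)) ->
  forall s, p s = expR (a * s) * (p 0 * cos (b * s) - q 0 * sin (b * s)) /\
            q s = expR (a * s) * (q 0 * cos (b * s) + p 0 * sin (b * s)).
Proof.
move=> dp dq s.
have dexp (r : R) : is_derive r 1 (fun r => expR (- a * r)) (expR (- a * r) * - a).
  by apply: is_derive_comp_mull; exact: is_derive_expR.
have dcos (r : R) : is_derive r 1 (fun r => cos (b * r)) (- sin (b * r) * b).
  by apply: is_derive_comp_mull; exact: is_derive_cos.
have dsin (r : R) : is_derive r 1 (fun r => sin (b * r)) (cos (b * r) * b).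
  by apply: is_derive_comp_mull; exact: is_derive_sin.
pose u r := expR (- a * r) * (p r * cos (b * r) + q r * sin (b * r)).
pose v r := expR (- a * r) * (q r * cos (b * r) - p r * sin (b * r)).
have u_cst : u s = p 0.
  have du (r : R) : is_derive r 1 u 0.
    by apply: is_derive_eq; rewrite /GRing.scale /=; ring.
  rewrite (is_derive_0_is_cst s 0 du).
  by rewrite /u !mulr0 expR0 cos0 sin0 mulr0 addr0 !mul1r mulr1.
have v_cst : v s = q 0.
  have dv (r : R) : is_derive r 1 v 0.
    by apply: is_derive_eq; rewrite /GRing.scale /=; ring.
  rewrite (is_derive_0_is_cst s 0 dv).
  by rewrite /v !mulr0 expR0 cos0 sin0 mulr0 subr0 !mul1r mulr1.
have expRNK : expR (a * s) * expR (- a * s) = 1 by rewrite -expRD mulNr subrr expR0.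
have pythag : cos (b * s) ^+ 2 + sin (b * s) ^+ 2 = 1 by rewrite cos2Dsin2.
rewrite -u_cst -v_cst /u /v; split.
- transitivity (expR (a * s) * expR (- a * s) * p s * (cos (b * s) ^+ 2 + sin (b * s) ^+ 2)).
    by rewrite expRNK pythag mulr1 mul1r.
  by ring.
- transitivity (expR (a * s) * expR (- a * s) * q s * (cos (b * s) ^+ 2 + sin (b * s) ^+ 2)).
    by rewrite expRNK pythag mulr1 mul1r.
  by ring.
Qed.

End RealPlanarODE.

Section ComplexLines.
Local Open Scope classical_set_scope.
Variable R : realType.
Local Notation C := (Cx R).
Local Notation Re := (@complex.Re R).
Local Notation Im := (@complex.Im R).

Lemma eqC (z w : C) : Re z = Re w -> Im z = Im w -> z = w.
Proof. by case: z => a b; case: w => u v /= -> ->. Qed.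

Lemma ReM (z w : C) : Re (z * w) = Re z * Re w - Im z * Im w.
Proof. by case: z => a b; case: w. Qed.

Lemma ImM (z w : C) : Im (z * w) = Re z * Im w + Im z * Re w.
Proof. by case: z => a b; case: w. Qed.

Lemma Re_realCM (a : R) (z : C) : Re (a%:C * z) = a * Re z.
Proof. by rewrite ReM /= mul0r subr0. Qed.

Lemma Im_realCM (a : R) (z : C) : Im (a%:C * z) = a * Im z.
Proof. by rewrite ImM /= mul0r addr0. Qed.

Lemma Re_mulNi (z : C) : Re (- 'i * z) = Im z.
Proof. by case: z => a b /=; rewrite oppr0 mul0r sub0r mulN1r opprK. Qed.

Lemma realC_eq0 (a : R) : (a%:C == 0 :> C) = (a == 0).
Proof. by apply/eqP/eqP => [[]|->]. Qed.

Lemma i_neq0 : ('i : C) != 0.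
Proof. by apply/eqP => /(congr1 Im) /= /eqP; rewrite oner_eq0. Qed.

Lemma normc_ge_Re (z : C) : (`|Re z|)%:C <= `|z|.
Proof.
rewrite normc_def lecR -sqrtr_sqr ler_sqrt; last by rewrite addr_ge0 ?sqr_ge0.
by rewrite lerDl sqr_ge0.
Qed.

Lemma cvg_Re {T : Type} {F : set_system T} {FF : Filter F} (G : T -> C) (l : C) :
  G @ F --> l -> (fun t => Re (G t)) @ F --> Re l.
Proof.
move=> /cvgrPdist_lt G_l; apply/cvgrPdist_lt => e e0.
have e0C : (0 : C) < e%:C by rewrite ltcR.
apply: filterS (G_l _ e0C) => t.
rewrite -raddfB /= -ltcR; exact: le_lt_trans (normc_ge_Re _).
Qed.

Lemma cvg_realC_dnbhs0 : (fun h : R => h%:C : C) @ (0 : R)^' --> (0 : C).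
Proof.
apply/cvgrPdist_lt => e e0.
have [-> e0R] : e = (Re e)%:C /\ 0 < Re e.
  by case: e e0 => a b; rewrite ltcE /= => /andP[/eqP ->].
near=> h; rewrite sub0r normrN normc_def /= expr0n addr0 sqrtr_sqr ltcR.
by near: h; exact: dnbhs0_lt.
Unshelve. all: by end_near.
Qed.

Lemma cvg_realC_mulr_dnbhs0 (c : C) : c != 0 ->
  (fun h : R => h%:C * c) @ (0 : R)^' --> (0 : C)^'.
Proof.
move=> c0 A /= A0.
have to0 : (fun h : R => h%:C * c) @ (0 : R)^' --> (0 : C).
  by rewrite -(mul0r c); apply: cvgMl; exact: cvg_realC_dnbhs0.
have hcA : \forall h \near (0 : R)^', h%:C * c != 0 -> A (h%:C * c) := to0 _ A0.
apply: filterS2 hcA (nbhs_dnbhs_neq (0 : R)) => h + h0; apply.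
by rewrite mulf_neq0 // realC_eq0.
Qed.

Lemma is_derive_Re_line (f : C -> C) (x c d : C) (s : R) : c != 0 ->
  is_derive (x + s%:C * c) (1 : C) f d ->
  is_derive s (1 : R) (fun r : R => Re (f (x + r%:C * c))) (Re (c * d)).
Proof.
move=> c0 [df_ex df_eq].
set x' := x + s%:C * c.
have quot_d : (fun k : C => k^-1 *: ((f \o shift x') (k *: 1) - f x')) @ (0 : C)^' --> d.
  by rewrite -df_eq; exact: df_ex.
pose P r := Re (f (x + r%:C * c)).
have lim : (fun h : R => h^-1 *: ((P \o shift s) (h *: 1) - P s)) @ (0 : R)^' --> Re (c * d).
  have Re_quot : _ @ (0 : R)^' --> Re (c * d) :=
    cvg_Re (cvgM (cvg_cst c) (cvg_comp _ _ (cvg_realC_mulr_dnbhs0 c0) quot_d)).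
  apply: cvg_trans; last exact: Re_quot.
  (* the real quotient at h is Re (c * q (h c)), q the complex quotient at x' *)
  apply: near_eq_cvg; near=> h.
  have hC0 : (h%:C : C) != 0.
    by rewrite realC_eq0; near: h; exact: nbhs_dnbhs_neq.
  rewrite /= /P /x' /GRing.scale /= !mulr1 -raddfB /= -Re_realCM fmorphV /=.
  have -> : x + (h + s)%:C * c = h%:C * c + (x + s%:C * c).
    by rewrite rmorphD /= mulrDl addrCA.
  by congr complex.Re; field; rewrite hC0 c0.
split; first by apply/cvg_ex; exists (Re (c * d)).
exact: cvg_lim lim.
Unshelve. all: by end_near.
Qed.

Lemma is_derive_Im_line (f : C -> C) (x c d : C) (s : R) : c != 0 ->
  is_derive (x + s%:C * c) (1 : C) f d ->
  is_derive s (1 : R) (fun r : R => Im (f (x + r%:C * c))) (Im (c * d)).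
Proof.
move=> c0 df.
have := is_derive_Re_line c0 (is_deriveZ (- 'i) df).
rewrite /GRing.scale /= mulrCA Re_mulNi.
by under eq_fun do rewrite Re_mulNi.
Qed.

Lemma unit_circle_cos_sin (a b : R) : a ^+ 2 + b ^+ 2 = 1 ->
  exists th, cos th = a /\ sin th = b.
Proof.
move=> ab1.
have a_itv : -1 <= a <= 1.
  rewrite -ler_norml -(@ler_pXn2r _ 2) ?nnegrE ?normr_ge0 // expr1n.
  by rewrite real_normK ?num_real // -ab1 lerDl sqr_ge0.
have cos_acos : cos (acos a) = a by rewrite acosK // in_itv.
have sin_acos : sin (acos a) = `|b|.
  by rewrite sin_acos // -ab1 addrAC subrr add0r sqrtr_sqr.
have [b0|b0] := leP 0 b.
  by exists (acos a); rewrite cos_acos sin_acos ger0_norm.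
by exists (- acos a); rewrite cosN sinN cos_acos sin_acos ltr0_norm ?opprK.
Qed.

Definition expC (w : C) : C := (expR (Re w))%:C * (cos (Im w) +i* sin (Im w)).

Lemma Re_expC (w : C) : Re (expC w) = expR (Re w) * cos (Im w).
Proof. exact: Re_realCM. Qed.

Lemma Im_expC (w : C) : Im (expC w) = expR (Re w) * sin (Im w).
Proof. exact: Im_realCM. Qed.

Lemma expC0 : expC 0 = 1.
Proof. by apply: eqC; rewrite ?Re_expC ?Im_expC /= expR0 ?cos0 ?sin0 ?mul1r ?mulr0. Qed.

Lemma expCD (v w : C) : expC (v + w) = expC v * expC w.
Proof.
apply: eqC; [rewrite Re_expC ReM | rewrite Im_expC ImM];
  rewrite !Re_expC !Im_expC !raddfD /= expRD ?cosD ?sinD; ring.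
Qed.

Lemma expC_surj (w : C) : w != 0 -> exists v, expC v = w.
Proof.
move=> w0; pose n2 := Re w ^+ 2 + Im w ^+ 2; pose n := Num.sqrt n2.
have n2_gt0 : 0 < n2.
  rewrite lt_def addr_ge0 ?sqr_ge0 // andbT paddr_eq0 ?sqr_ge0 // !sqrf_eq0.
  by apply: contra w0 => /andP[/eqP Re0 /eqP Im0]; apply/eqP/eqC.
have n0 : 0 < n by rewrite sqrtr_gt0.
have [|th [costh sinth]] := @unit_circle_cos_sin (Re w / n) (Im w / n).
  by rewrite !expr_div_n -mulrDl sqr_sqrtr ?ltW // divff ?gt_eqF.
exists (ln n +i* th).
by apply: eqC; rewrite ?Re_expC ?Im_expC /= lnK ?posrE // ?costh ?sinth mulrC divfK ?gt_eqF.
Qed.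

Lemma linear_ode_line (f : C -> C) (mu x c : C) : c != 0 ->
  (forall t, is_derive t (1 : C) f (mu * f t)) ->
  forall s : R, f (x + s%:C * c) = f x * expC (s%:C * (c * mu)).
Proof.
move=> c0 df s.
pose p r := Re (f (x + r%:C * c)); pose q r := Im (f (x + r%:C * c)).
have dp (r : R) : is_derive r 1 p (Re (c * mu) * p r - Im (c * mu) * q r).
  have -> : Re (c * mu) * p r - Im (c * mu) * q r = Re (c * (mu * f (x + r%:C * c))).
    by rewrite [in RHS]mulrA [RHS]ReM.
  exact: is_derive_Re_line.
have dq (r : R) : is_derive r 1 q (Re (c * mu) * q r + Im (c * mu) * p r).
  have -> : Re (c * mu) * q r + Im (c * mu) * p r = Im (c * (mu * f (x + r%:C * c))).
    by rewrite [in RHS]mulrA [RHS]ImM addrC.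
  exact: is_derive_Im_line.
have [ps qs] := planar_linear_ode_sol dp dq s.
have x0 : x + 0%:C * c = x by rewrite mul0r addr0.
apply: eqC; [rewrite -/(p s) ps [RHS]ReM | rewrite -/(q s) qs [RHS]ImM];
  rewrite Re_expC Im_expC Re_realCM Im_realCM /p /q x0;
  by rewrite ?(mulrC s (Re (c * mu))) ?(mulrC s (Im (c * mu))); ring.
Qed.

Lemma derive0_const (f : C -> C) :
  (forall t, is_derive t (1 : C) f 0) -> forall t, f t = f 0.
Proof.
move=> df t.
have df0 (t' : C) : is_derive t' (1 : C) f (0 * f t') by rewrite mul0r.
have line x c (s : R) : c != 0 -> f (x + s%:C * c) = f x.
  by move=> c0; rewrite (linear_ode_line _ c0 df0) !mulr0 expC0 mulr1.
rewrite [t]complexE (mulrC 'i) line ?i_neq0 // -[_%:C]add0r -[_%:C]mulr1.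
by rewrite line ?oner_neq0.
Qed.

Lemma linear_ode_surj (f : C -> C) (mu : C) : mu != 0 ->
  (forall t, is_derive t (1 : C) f (mu * f t)) -> f 0 != 0 ->
  forall w, w != 0 -> exists t, f t = w.
Proof.
move=> mu0 df f00 w w0.
have [v ev] := expC_surj (mulf_neq0 w0 (invr_neq0 f00)).
exists ((Re v)%:C * mu^-1 + (Im v)%:C * ('i * mu^-1)).
rewrite linear_ode_line ?mulf_neq0 ?i_neq0 ?invr_neq0 //.
rewrite -[(Re v)%:C * _]add0r linear_ode_line ?invr_neq0 //.
rewrite mulVf // mulfVK // mulr1 -mulrA -expCD (mulrC _ 'i) -complexE ev.
by rewrite mulrC divfK.
Qed.
End ComplexLines.

Section Flow.
Variable R : realType.
Local Notation C := (Cx R).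

Definition eigen_coord (L z p q : C) : C := 2%:R * p - (3%:R * z + L) * q.

Lemma eigen_coord_mul (L z p q : C) : L ^+ 2 = 9%:R * z ^+ 2 - 4%:R -> inM p q z ->
  eigen_coord L z p q * eigen_coord (- L) z p q = - 4%:R * z ^+ 2.
Proof.
rewrite /inM /eigen_coord => L2 pqz.
transitivity (4%:R * ((p ^+ 2 + q ^+ 2 + z ^+ 2) - 3%:R * p * q * z) - 4%:R * z ^+ 2
  + ((9%:R * z ^+ 2 - 4%:R) - L ^+ 2) * q ^+ 2); first by ring.
by rewrite pqz L2 !subrr mulr0 mul0r add0r addr0 mulNr.
Qed.

Lemma eigen_coord_inj (L z p q p' q' : C) : L != 0 ->
  eigen_coord L z p q = eigen_coord L z p' q' ->
  eigen_coord (- L) z p q = eigen_coord (- L) z p' q' -> p = p' /\ q = q'.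
Proof.
move=> L0 eL eNL.
have two0 : (2%:R : C) != 0 by rewrite pnatr_eq0.
have qq' : q = q'.
  apply: (@mulfI _ (2%:R * L)); first by rewrite mulf_neq0.
  have diff p0 q0 : 2%:R * L * q0 = eigen_coord (- L) z p0 q0 - eigen_coord L z p0 q0.
    by rewrite /eigen_coord; ring.
  by rewrite (diff p q) (diff p' q') eL eNL.
by move: eL; rewrite /eigen_coord qq' => /addIr /(mulfI two0).
Qed.

Variables (x y z : C) (X Y Z : C -> C).
Hypothesis flow : is_flow_Vz X Y Z x y z.

Lemma flow_Z_const t : Z t = z.
Proof. by case: flow => _ _ <- dXYZ; apply: derive0_const => s; case: (dXYZ s). Qed.

Lemma flow_inM : inM x y z -> forall t, inM (X t) (Y t) z.
Proof.
case: flow => X0 Y0 Z0 dXYZ xyz t.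
pose F s := X s ^+ 2 + Y s ^+ 2 + Z s ^+ 2 - 3%:R * X s * Y s * Z s.
have dF s : is_derive s (1 : C) F 0.
  by case: (dXYZ s) => dX dY dZ; apply: is_derive_eq; rewrite /GRing.scale /=; ring.
apply/eqP; rewrite -subr_eq0 -(flow_Z_const t); apply/eqP.
by rewrite -/(F t) (derive0_const dF) /F X0 Y0 Z0 xyz subrr.
Qed.

Lemma flow_eigen_coord (L : C) : L ^+ 2 = 9%:R * z ^+ 2 - 4%:R ->
  forall t, is_derive t (1 : C) (fun t => eigen_coord L z (X t) (Y t))
                                (L * eigen_coord L z (X t) (Y t)).
Proof.
move=> L2 t; case: flow => _ _ _ /(_ t)[dX dY _].
apply: is_derive_eq; rewrite /GRing.scale /= /eigen_coord flow_Z_const.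
apply/eqP; rewrite -subr_eq0; apply/eqP.
transitivity ((L ^+ 2 - (9%:R * z ^+ 2 - 4%:R)) * Y t); first by ring.
by rewrite L2 subrr mul0r.
Qed.

End Flow.

Theorem lemma6p5 (R : realType) (x y z : Cx R) (X Y Z : Cx R -> Cx R) :
  inM x y z -> z != 0 -> 4%:R - 9%:R * z ^+ 2 != 0 ->
  is_flow_Vz X Y Z x y z ->
  (forall t : Cx R, Z t = z /\ inM (X t) (Y t) z) /\
  (forall u v : Cx R, inM u v z ->
     exists t : Cx R, [/\ X t = u, Y t = v & Z t = z]).
Proof.
move=> xyz z0 Lz flow.
have inMt := flow_inM flow xyz.
split=> [t|u v uvz]; first by split; [exact: flow_Z_const flow t | exact: inMt].
pose L := sqrtC (9%:R * z ^+ 2 - 4%:R).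
have L2 : L ^+ 2 = 9%:R * z ^+ 2 - 4%:R := sqrtCK _.
have L0 : L != 0.
  by apply: contraNneq Lz => L0; rewrite -oppr_eq0 opprB -L2 L0 expr0n.
have eigen_neq0 p q : inM p q z -> eigen_coord L z p q != 0.
  move=> /(eigen_coord_mul L2) prod; apply: contraNneq z0 => e0.
  by move: prod; rewrite e0 mul0r => /esym/eqP; rewrite mulf_eq0 oppr_eq0 pnatr_eq0 sqrf_eq0.
have [t Lt] := linear_ode_surj L0 (flow_eigen_coord flow L2)
  (eigen_neq0 _ _ (inMt 0)) (eigen_neq0 _ _ uvz).
have NLt : eigen_coord (- L) z (X t) (Y t) = eigen_coord (- L) z u v.
  by apply: (mulfI (eigen_neq0 _ _ uvz)); rewrite -{1}Lt !eigen_coord_mul.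
have [Xt Yt] := eigen_coord_inj L0 Lt NLt.
by exists t; split; last exact: flow_Z_const flow t.
Qed.
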